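(* For any state $\eta$ of $R$, any state $\tau$ of $A$ and any $p\in[0,1]$, with $\Lambda_p(\eta):=p\eta+(1-p)\mathbb{1}/d$ and $d=d_R$, $$\Phi_{\Lambda_p(\eta)}(\tau)=p\,\Phi_\eta(\tau)+(1-p)\,\Phi_{\mathbb{1}/d}(\tau)=p\,\Phi_\eta(\tau)+\frac{1-p}{d}.$$
   Context: $G$ is a compact group with normalized Haar measure $dg$; finite-dimensional systems $A,R$ carry continuous unitary representations $U_A,U_R$. On $RA$, $\mathcal{G}(M)=\int dg\,(U_R(g)\otimes U_A(g))M(U_R(g)\otimes U_A(g))^\dagger$. $\Phi_\eta(\tau):=\inf_{X\ge0}\{\mathrm{tr}[X]:\mathbb{1}_R\otimes X-\mathcal{G}(\eta\otimes\tau)\ge0\}$. *)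

From HB Require Import structures.
From mathcomp Require Import all_boot all_order all_algebra.
From mathcomp Require Import all_classical all_reals all_analysis.
From mathcomp.real_closed Require Import complex mxtens.

Set Implicit Arguments.
Unset Strict Implicit.
Unset Printing Implicit Defensive.

Import Order.TTheory GRing.Theory Num.Theory.
Import numFieldTopology.Exports numFieldNormedType.Exports.
Local Open Scope classical_set_scope.
Local Open Scope ring_scope.

Notation borelG G := (g_sigma_algebraType (@open G)).

Section QDefs.
Variable R : realType.
Local Notation C := R[i].

Definition adjmx {m n : nat} (A : 'M[C]_(m, n)) : 'M[C]_(n, m) :=
  (map_mx (@conjc R) A)^T.

(* positive semidefinite: Hermitian with nonnegative quadratic form
   (0 <= z in the order of R[i] means z is a nonnegative real) *)
Definition psdmx {n : nat} (A : 'M[C]_n) : Prop :=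
  A = adjmx A /\ forall v : 'cV[C]_n, 0 <= (adjmx v *m A *m v) 0 0.

Definition is_state {n : nat} (rho : 'M[C]_n) : Prop :=
  psdmx rho /\ \tr rho = 1.

Definition is_compact_group (G : ptopologicalType)
  (mul : G -> G -> G) (inv : G -> G) (e : G) : Prop :=
  [/\ (forall x y z, mul x (mul y z) = mul (mul x y) z),
      (forall x, mul e x = x /\ mul x e = x),
      (forall x, mul (inv x) x = e /\ mul x (inv x) = e) &
      [/\ continuous (fun gh : G * G => mul gh.1 gh.2),
           continuous inv,
           hausdorff_space G &
           compact [set: G]]].


Definition is_normalized_haar (G : ptopologicalType) (mul : G -> G -> G)
  (mu : {measure set (borelG G) -> \bar R}) : Prop :=
  [/\ mu [set: borelG G] = 1%E,
      (forall (g : G) (A : set (borelG G)), measurable A ->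
          mu [set mul g x | x in A] = mu A),
      (forall A : set (borelG G), measurable A ->
          mu A = ereal_inf [set mu U | U in [set U : set G | open U /\ A `<=` U]]) &
      (forall U : set G, open U ->
          mu U = ereal_sup [set mu K | K in [set K : set G | compact K /\ K `<=` U]])].

Definition is_unitary_rep (G : ptopologicalType) (mul : G -> G -> G) (e : G)
  (n : nat) (U : G -> 'M[C]_n) : Prop :=
  [/\ (forall g h, U (mul g h) = U g *m U h),
      U e = 1%:M,
      (forall g, U g *m adjmx (U g) = 1%:M) &
      (forall i j, continuous (fun g => complex.Re (U g i j)) /\
                   continuous (fun g => complex.Im (U g i j)))].

Definition mx_integral (G : ptopologicalType)
  (mu : {measure set (borelG G) -> \bar R}) {m n : nat}
  (F : borelG G -> 'M[C]_(m, n)) : 'M[C]_(m, n) :=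
  \matrix_(i, j) Complex (Rintegral mu [set: borelG G] (fun g => complex.Re (F g i j)))
                         (Rintegral mu [set: borelG G] (fun g => complex.Im (F g i j))).

Definition twirl (G : ptopologicalType) (mu : {measure set (borelG G) -> \bar R})
  {dR dA : nat} (UR : G -> 'M[C]_dR) (UA : G -> 'M[C]_dA)
  (M : 'M[C]_(dR * dA)) : 'M[C]_(dR * dA) :=
  mx_integral mu (fun g : borelG G =>
    (UR g *t UA g) *m M *m adjmx (UR g *t UA g)).

Definition Phi (G : ptopologicalType) (mu : {measure set (borelG G) -> \bar R})
  {dR dA : nat} (UR : G -> 'M[C]_dR) (UA : G -> 'M[C]_dA)
  (eta : 'M[C]_dR) (tau : 'M[C]_dA) : R :=
  inf [set complex.Re (\tr X) | X in [set X : 'M[C]_dA |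
         psdmx X /\ psdmx ((1%:M : 'M[C]_dR) *t X - twirl mu UR UA (eta *t tau))]].

End QDefs.

From HB Require Import structures.
From mathcomp Require Import all_boot all_order all_algebra.
From mathcomp Require Import all_classical all_reals all_analysis.
From mathcomp.real_closed Require Import complex mxtens.

Set Implicit Arguments.
Unset Strict Implicit.
Unset Printing Implicit Defensive.

Import Order.TTheory GRing.Theory Num.Theory.
Import numFieldTopology.Exports numFieldNormedType.Exports.
Local Open Scope classical_set_scope.
Local Open Scope ring_scope.
Local Open Scope complex_scope.

(* The twirl G is linear, and unitarity of U_R gives G(1 ⊗ τ) = 1 ⊗ σ, where σ is
   the U_A-average of τ, again a state.  Hence G(Λ_p(η) ⊗ τ) = p ρ + q (1 ⊗ σ) with
   ρ = G(η ⊗ τ) ≥ 0 and q = (1 - p)/d.  The map X ↦ p X + q σ sends feasible points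
   for ρ to feasible points for this mixture and tr X to p tr X + q; conversely,
   1 ⊗ (X - q σ) ≥ p ρ ≥ 0 for every X feasible for the mixture, so (X - q σ)/p is
   feasible for ρ when p > 0.  Thus Φ is affine along such mixtures; the infimum is
   over a nonempty set since η ≤ 1 makes σ itself feasible for ρ. *)

Section ComplexParts.

Variable R : realType.
Local Notation C := R[i].

Lemma ReD (x y : C) : complex.Re (x + y) = complex.Re x + complex.Re y.
Proof. by case: x y => [a b] [c d]. Qed.
Lemma ImD (x y : C) : complex.Im (x + y) = complex.Im x + complex.Im y.
Proof. by case: x y => [a b] [c d]. Qed.
Lemma ReM (x y : C) :
  complex.Re (x * y) = complex.Re x * complex.Re y - complex.Im x * complex.Im y.
Proof. by case: x y => [a b] [c d]. Qed.
Lemma ImM (x y : C) :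
  complex.Im (x * y) = complex.Re x * complex.Im y + complex.Im x * complex.Re y.
Proof. by case: x y => [a b] [c d]. Qed.
Lemma ReJ (x : C) : complex.Re (conjc x) = complex.Re x.
Proof. by case: x. Qed.
Lemma ImJ (x : C) : complex.Im (conjc x) = - complex.Im x.
Proof. by case: x. Qed.

Lemma ReN (x : C) : complex.Re (- x) = - complex.Re x.
Proof. by case: x. Qed.

Lemma Re_realM (r : R) (z : C) : complex.Re (r%:C * z) = r * complex.Re z.
Proof. by rewrite ReM /= mul0r subr0. Qed.

End ComplexParts.

Section Adjoint.

Variable R : realType.
Local Notation C := R[i].

Lemma conjcR (r : R) : conjc r%:C = r%:C :> C.
Proof. exact: conjc_real. Qed.

Lemma adjmxE m n (A : 'M[C]_(m, n)) i j : adjmx A i j = conjc (A j i).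
Proof. by rewrite !mxE. Qed.

Lemma adjmxK m n (A : 'M[C]_(m, n)) : adjmx (adjmx A) = A.
Proof. by apply/matrixP => i j; rewrite !adjmxE conjcK. Qed.

Lemma adjmxD m n (A B : 'M[C]_(m, n)) : adjmx (A + B) = adjmx A + adjmx B.
Proof. by apply/matrixP => i j; rewrite !mxE rmorphD. Qed.

Lemma adjmxZ m n (c : C) (A : 'M[C]_(m, n)) : adjmx (c *: A) = conjc c *: adjmx A.
Proof. by apply/matrixP => i j; rewrite !mxE rmorphM. Qed.

Lemma adjmxM m n p (A : 'M[C]_(m, n)) (B : 'M[C]_(n, p)) :
  adjmx (A *m B) = adjmx B *m adjmx A.
Proof.
apply/matrixP => i j; rewrite !mxE rmorph_sum; apply: eq_bigr => k _.
by rewrite !mxE rmorphM mulrC.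
Qed.

Lemma adjmx1 n : adjmx (1%:M : 'M[C]_n) = 1%:M.
Proof. by apply/matrixP => i j; rewrite !mxE conjc_nat eq_sym. Qed.

Lemma adjmx_diag n (E : 'rV[C]_n) : (forall k, E 0 k \is Num.real) ->
  adjmx (diag_mx E) = diag_mx E.
Proof.
move=> E_real; apply/matrixP => i j; rewrite !mxE eq_sym.
case: eqP => [->|_]; rewrite ?mulr0n ?conjc0 // !mulr1n.
by rewrite -(RRe_real (E_real j)) conjcR.
Qed.

Lemma adjmx_delta m n (i : 'I_m) (j : 'I_n) :
  adjmx (delta_mx i j : 'M[C]_(m, n)) = delta_mx j i.
Proof. by apply/matrixP => a b; rewrite adjmxE !mxE conjc_nat andbC. Qed.

Lemma adjmx_tens m n p q (A : 'M[C]_(m, n)) (B : 'M[C]_(p, q)) :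
  adjmx (A *t B) = adjmx A *t adjmx B.
Proof. by apply/matrixP => i j; rewrite !mxE rmorphM. Qed.

End Adjoint.

Section Tensor.

Variable K : comPzRingType.

Lemma tensmxDl m n p q (A B : 'M[K]_(m, n)) (D : 'M[K]_(p, q)) :
  (A + B) *t D = A *t D + B *t D.
Proof. by apply/matrixP => i j; rewrite !mxE mulrDl. Qed.

Lemma tensmxDr m n p q (A : 'M[K]_(m, n)) (B D : 'M[K]_(p, q)) :
  A *t (B + D) = A *t B + A *t D.
Proof. by apply/matrixP => i j; rewrite !mxE mulrDr. Qed.

Lemma tensmxBr m n p q (A : 'M[K]_(m, n)) (B D : 'M[K]_(p, q)) :
  A *t (B - D) = A *t B - A *t D.
Proof. by apply/matrixP => i j; rewrite !mxE mulrBr. Qed.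

Lemma tensmxZl m n p q (c : K) (A : 'M[K]_(m, n)) (B : 'M[K]_(p, q)) :
  (c *: A) *t B = c *: (A *t B).
Proof. by apply/matrixP => i j; rewrite !mxE mulrA. Qed.

Lemma tensmxZr m n p q (c : K) (A : 'M[K]_(m, n)) (B : 'M[K]_(p, q)) :
  A *t (c *: B) = c *: (A *t B).
Proof. by apply/matrixP => i j; rewrite !mxE mulrCA. Qed.

Lemma tens_diag_mx m n (D : 'rV[K]_m) (E : 'rV[K]_n) :
  diag_mx D *t diag_mx E
  = diag_mx (\row_k (D 0 (mxtens_unindex k).1 * E 0 (mxtens_unindex k).2)).
Proof.
apply/matrixP => k l; case: (mxtens_indexP k) => i a; case: (mxtens_indexP l) => j b.
rewrite tensmxE !mxE mxtens_indexK (inj_eq (can_inj (@mxtens_indexK _ _))).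
by case: eqP => [->|/eqP ij]; case: eqP => [->|/eqP ab];
  rewrite ?mulr1n ?mulr0n ?mulr0 ?mul0r // xpair_eqE ?eqxx ?(negPf ij) ?(negPf ab) ?andbF.
Qed.

End Tensor.

Section PositiveSemidefinite.

Variable R : realType.
Local Notation C := R[i].

Lemma psdmxD n (A B : 'M[C]_n) : psdmx A -> psdmx B -> psdmx (A + B).
Proof.
move=> [hA qA] [hB qB]; split; first by rewrite adjmxD -hA -hB.
by move=> v; rewrite mulmxDr mulmxDl mxE addr_ge0.
Qed.

Lemma psdmxZ n (r : R) (A : 'M[C]_n) : 0 <= r -> psdmx A -> psdmx (r%:C *: A).
Proof.
move=> r_ge0 [hA qA]; split; first by rewrite adjmxZ conjcR -hA.
by move=> v; rewrite -scalemxAr -scalemxAl mxE mulr_ge0 ?ler0c.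
Qed.

Lemma psdmx_diag n (E : 'rV[C]_n) : (forall k, 0 <= E 0 k) -> psdmx (diag_mx E).
Proof.
move=> E_ge0; split.
  by rewrite adjmx_diag // => k; apply: ger0_real.
move=> v; rewrite -mulmxA mul_diag_mx mxE; apply: sumr_ge0 => i _.
by rewrite !mxE mulrCA [conjc _ * _]mulrC -sqr_normc mulr_ge0 ?exprn_ge0.
Qed.

Lemma psdmx_congruence n k (W : 'M[C]_(n, k)) (M : 'M[C]_k) :
  psdmx M -> psdmx (W *m M *m adjmx W).
Proof.
move=> [hM qM]; split; first by rewrite !adjmxM adjmxK -hM mulmxA.
by move=> v; have := qM (adjmx W *m v); rewrite adjmxM adjmxK !mulmxA.
Qed.

Lemma psdmx_diag_ge0 n (A : 'M[C]_n) i : psdmx A -> 0 <= A i i.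
Proof.
by move=> [_ /(_ (delta_mx i 0))]; rewrite adjmx_delta -rowE -colE !mxE.
Qed.

Lemma psdmx_Re_tr_ge0 n (A : 'M[C]_n) : psdmx A -> 0 <= complex.Re (\tr A).
Proof.
move=> pA; have : 0 <= \tr A by apply: sumr_ge0 => i _; apply: psdmx_diag_ge0.
by rewrite lecE => /andP[].
Qed.

Lemma psdmx_of_tens1 m n (Y : 'M[C]_n) : (0 < m)%N ->
  psdmx ((1%:M : 'M[C]_m) *t Y) -> psdmx Y.
Proof.
move=> m_gt0 [h q]; pose i0 := Ordinal m_gt0; split.
  apply/matrixP => a b.
  have /matrixP/(_ (mxtens_index (i0, a)) (mxtens_index (i0, b))) := h.
  by rewrite adjmx_tens adjmx1 !tensmxE !mxE eqxx !mul1r.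
move=> v; pose e : 'cV[C]_m := delta_mx i0 0.
pose o := mxtens_index (0 : 'I_1, 0 : 'I_1).
have -> : (adjmx v *m Y *m v) 0 0 = (adjmx (e *t v) *m (1%:M *t Y) *m (e *t v)) o o.
  by rewrite adjmx_tens adjmx_delta !tensmx_mul mulmx1 mul_delta_mx tensmxE !mxE mul1r.
have -> : o = 0 by apply: val_inj.
exact: q.
Qed.

Lemma adjmx_map_trmx m n (A : 'M[C]_(m, n)) : adjmx A = map_mx Num.conj A^T.
Proof. by apply/matrixP => i j; rewrite !mxE. Qed.

Lemma psdmx_spectral n (A : 'M[C]_n) : psdmx A ->
  exists W : 'M[C]_n, exists E : 'rV[C]_n,
    [/\ A = W *m diag_mx E *m adjmx W, W *m adjmx W = 1%:M & forall k, 0 <= E 0 k].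
Proof.
move=> pA; have P_unitary := spectral_unitarymx A.
have /orthomx_spectralP : A \is normalmx.
  by apply/normalmxP; rewrite -adjmx_map_trmx -pA.1.
rewrite (invmx_unitary P_unitary) -adjmx_map_trmx.
set P := spectralmx A; set D := spectral_diag A => eA.
have PP : P *m adjmx P = 1%:M by rewrite adjmx_map_trmx; apply/unitarymxP.
exists (adjmx P), D; split; first by rewrite adjmxK.
  by rewrite adjmxK; apply: mulmx1C.
move=> k; have := psdmx_diag_ge0 k (psdmx_congruence P pA).
by rewrite eA !mulmxA PP mul1mx -mulmxA PP mulmx1 mxE eqxx.
Qed.

Lemma psdmx_tens m n (B : 'M[C]_m) (D : 'M[C]_n) :
  psdmx B -> psdmx D -> psdmx (B *t D).
Proof.
move=> /psdmx_spectral[V [b [-> _ b_ge0]]] /psdmx_spectral[W [e [-> _ e_ge0]]].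
rewrite -!tensmx_mul -adjmx_tens tens_diag_mx.
by apply/psdmx_congruence/psdmx_diag => k; rewrite mxE mulr_ge0.
Qed.

Lemma psdmx_1B_state n (A : 'M[C]_n) : is_state A -> psdmx (1%:M - A).
Proof.
move=> [/psdmx_spectral[W [E [-> WW E_ge0]]] trA].
have E_le1 k : E 0 k <= 1.
  rewrite -trA mxtrace_mulC mulmxA (mulmx1C WW) mul1mx mxtrace_diag.
  by rewrite (bigD1 k) //= lerDl sumr_ge0.
have -> : 1%:M - W *m diag_mx E *m adjmx W = W *m diag_mx (const_mx 1 - E) *m adjmx W.
  by rewrite raddfB /= diag_const_mx mulmxBr mulmx1 mulmxBl WW.
by apply/psdmx_congruence/psdmx_diag => k; rewrite !mxE subr_ge0.
Qed.

Lemma state_dim_gt0 n (A : 'M[C]_n) : is_state A -> (0 < n)%N.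
Proof.
by case: n A => // A [_]; rewrite /mxtrace big_ord0 => /esym/eqP; rewrite oner_eq0.
Qed.

End PositiveSemidefinite.

Section AffineOptimum.

Variables (R : realType) (dR dA : nat).
Local Notation C := R[i].
Local Notation "1_R" := (1%:M : 'M[C]_dR).

Definition feasible (rho : 'M[C]_(dR * dA)) (X : 'M[C]_dA) :=
  psdmx X /\ psdmx (1_R *t X - rho).

Definition Phi_rho (rho : 'M[C]_(dR * dA)) : R :=
  inf [set complex.Re (\tr X) | X in feasible rho].

Lemma Phi_rho_le_tr rho X : feasible rho X -> Phi_rho rho <= complex.Re (\tr X).
Proof.
move=> fX; apply: ge_inf; last by exists X.
by exists 0 => _ [Y [pY _] <-]; apply: psdmx_Re_tr_ge0.
Qed.

Variables (rho : 'M[C]_(dR * dA)) (s : 'M[C]_dA) (p q : R).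
Hypotheses (dR_gt0 : (0 < dR)%N) (rho_psd : psdmx rho).
Hypotheses (s_psd : psdmx s) (s_tr : \tr s = 1) (p_ge0 : 0 <= p) (q_ge0 : 0 <= q).

Let rho' := p%:C *: rho + q%:C *: (1_R *t s).

Lemma Re_tr_affine (X : 'M[C]_dA) :
  complex.Re (\tr (p%:C *: X + q%:C *: s)) = p * complex.Re (\tr X) + q.
Proof. by rewrite mxtraceD !mxtraceZ s_tr ReD !Re_realM mulr1. Qed.

Lemma feasible_affine X : feasible rho X -> feasible rho' (p%:C *: X + q%:C *: s).
Proof.
move=> [X_psd fX]; split; first by apply: psdmxD; apply: psdmxZ.
suff -> : 1_R *t (p%:C *: X + q%:C *: s) - rho' = p%:C *: (1_R *t X - rho).
  exact: psdmxZ.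
by rewrite /rho' tensmxDr !tensmxZr scalerBr opprD addrACA subrr addr0.
Qed.

Lemma feasible_affine_lb X : feasible rho' X ->
  p * Phi_rho rho + q <= complex.Re (\tr X).
Proof.
move=> [X_psd fX]; pose Y := X - q%:C *: s.
(* 1 ⊗ Y ≥ p ρ ≥ 0, so Y ≥ 0 and, when p > 0, Y/p is feasible for ρ. *)
have eY : 1_R *t X - rho' = 1_R *t Y - p%:C *: rho.
  by rewrite /Y /rho' tensmxBr tensmxZr opprD addrA addrAC.
have Y_psd : psdmx Y.
  apply: (psdmx_of_tens1 dR_gt0); rewrite -[1_R *t Y](subrK (p%:C *: rho)) -eY.
  exact: psdmxD fX (psdmxZ p_ge0 rho_psd).
have -> : complex.Re (\tr X) = complex.Re (\tr Y) + q.
  by rewrite /Y mxtraceD raddfN /= mxtraceZ s_tr ReD ReN Re_realM mulr1 subrK.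
rewrite lerD2r; have [->|p_neq0] := eqVneq p 0; first by rewrite mul0r psdmx_Re_tr_ge0.
have p_gt0 : 0 < p by rewrite lt0r p_neq0.
pose X1 := (p^-1)%:C *: Y.
have fX1 : feasible rho X1.
  split; first by apply: psdmxZ; rewrite ?invr_ge0.
  have -> : 1_R *t X1 - rho = (p^-1)%:C *: (1_R *t Y - p%:C *: rho).
    by rewrite scalerBr scalerA -rmorphM (mulVf p_neq0) scale1r tensmxZr.
  by rewrite -eY; apply: psdmxZ; rewrite ?invr_ge0.
have := Phi_rho_le_tr fX1; rewrite /X1 mxtraceZ Re_realM.
by rewrite -(ler_pM2l p_gt0) mulrA mulfV // mul1r.
Qed.

(* Feasibility of some X is needed: the infimum of an empty set is 0. *)
Lemma Phi_rho_affine : (exists X, feasible rho X) -> Phi_rho rho' = p * Phi_rho rho + q.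
Proof.
move=> [X0 fX0]; apply/eqP; rewrite eq_le; apply/andP; split; last first.
  apply: lb_le_inf => [|_ [X fX <-]]; last exact: feasible_affine_lb.
  by eexists; exists (p%:C *: X0 + q%:C *: s); first exact: feasible_affine.
have [p0|p_neq0] := eqVneq p 0.
  by have := Phi_rho_le_tr (feasible_affine fX0); rewrite Re_tr_affine p0 !mul0r.
have p_gt0 : 0 < p by rewrite lt0r p_neq0.
rewrite -lerBlDr -ler_pdivrMl //; apply: lb_le_inf => [|_ [X fX <-]].
  by exists (complex.Re (\tr X0)), X0.
rewrite ler_pdivrMl // lerBlDr -Re_tr_affine.
exact: Phi_rho_le_tr (feasible_affine fX).
Qed.

End AffineOptimum.

Section ComplexIntegral.

Variables (R : realType) (G : ptopologicalType).
Variable mu : {measure set (borelG G) -> \bar R}.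
Hypothesis compactG : compact [set: G].
Hypothesis mu_setT : mu [set: borelG G] = 1%E.

Local Notation C := R[i].

(* Discharges, through [//], the measurability side conditions of the [Rintegral] lemmas. *)
Let measT : measurable [set: borelG G]. Proof. exact: measurableT. Qed.

Lemma continuous_measurable_fun (f : G -> R) : continuous f ->
  measurable_fun [set: borelG G] (f : borelG G -> R).
Proof.
move=> /continuousP cf.
apply: (measurability _ (measurable_realfun.RGenOpens.measurableE R)).
move=> _ [_ [a [b ->] <-]]; rewrite setTI.
by apply: sub_sigma_algebra; apply/cf/interval_open.
Qed.

Lemma continuous_integrable (f : G -> R) : continuous f ->
  mu.-integrable [set: borelG G] (EFin \o (f : borelG G -> R)).
Proof.
move=> cf; apply: measurable_bounded_integrable => //.
- by rewrite mu_setT ltry.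
- exact: continuous_measurable_fun.
have /compact_bounded : compact [set f x | x in [set: G]].
  by apply: (@continuous_compact G R^o) => //; apply: continuous_subspaceT.
rewrite /bounded_set /bounded_near /=.
by apply: filterS => M fM x _; apply: fM; exists x.
Qed.

Definition ccontinuous (f : G -> C) :=
  continuous (fun g => complex.Re (f g)) /\ continuous (fun g => complex.Im (f g)).

Definition cintegral (f : G -> C) : C :=
  Complex (Rintegral mu [set: borelG G] (fun g => complex.Re (f g)))
          (Rintegral mu [set: borelG G] (fun g => complex.Im (f g))).

Lemma ccontinuous_cst c : ccontinuous (fun=> c).
Proof. by split; apply: cst_continuous. Qed.

Lemma ccontinuousD f h : ccontinuous f -> ccontinuous h ->
  ccontinuous (fun g => f g + h g).
Proof.
move=> [f1 f2] [h1 h2]; split => x.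
  by under eq_fun do rewrite ReD; exact: continuousD (f1 x) (h1 x).
by under eq_fun do rewrite ImD; exact: continuousD (f2 x) (h2 x).
Qed.

Lemma ccontinuousM f h : ccontinuous f -> ccontinuous h ->
  ccontinuous (fun g => f g * h g).
Proof.
move=> [f1 f2] [h1 h2]; split => x.
  under eq_fun do rewrite ReM.
  exact: continuousB (continuousM (f1 x) (h1 x)) (continuousM (f2 x) (h2 x)).
under eq_fun do rewrite ImM.
exact: continuousD (continuousM (f1 x) (h2 x)) (continuousM (f2 x) (h1 x)).
Qed.

Lemma ccontinuousJ f : ccontinuous f -> ccontinuous (fun g => conjc (f g)).
Proof.
move=> [f1 f2]; split => x; first by under eq_fun do rewrite ReJ; exact: f1.
by under eq_fun do rewrite ImJ; exact: continuousN (f2 x).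
Qed.

Lemma ccontinuous_sum (I : eqType) (r : seq I) (P : pred I) (F : I -> G -> C) :
  (forall i, ccontinuous (F i)) -> ccontinuous (fun g => \sum_(i <- r | P i) F i g).
Proof.
move=> cF; elim: r => [|a r IHr].
  by under eq_fun do rewrite big_nil; apply: ccontinuous_cst.
under eq_fun do rewrite big_cons.
by case: (P a) => //; apply: ccontinuousD.
Qed.

Lemma eq_cintegral f h : f =1 h -> cintegral f = cintegral h.
Proof. by move=> /funext ->. Qed.

Lemma cintegral_cst c : cintegral (fun=> c) = c.
Proof. by rewrite /cintegral !Rintegral_cst // mu_setT !mulr1; case: c. Qed.

Lemma cintegralD f h : ccontinuous f -> ccontinuous h ->
  cintegral (fun g => f g + h g) = cintegral f + cintegral h.
Proof.
move=> [f1 f2] [h1 h2]; rewrite /cintegral.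
under eq_Rintegral do rewrite ReD.
under [X in Complex _ X]eq_Rintegral do rewrite ImD.
by rewrite !RintegralD //; apply: continuous_integrable.
Qed.

Lemma cintegralZl c f : ccontinuous f ->
  cintegral (fun g => c * f g) = c * cintegral f.
Proof.
move=> [f1 f2]; rewrite /cintegral.
under eq_Rintegral do rewrite ReM.
under [X in Complex _ X]eq_Rintegral do rewrite ImM.
have scale_cont k (u : G -> R) : continuous u -> continuous (fun g => k * u g).
  by move=> cu x; exact: continuousM (@cst_continuous _ _ k x) (cu x).
rewrite RintegralB ?RintegralD ?RintegralZl //;
  try by apply: continuous_integrable => //; apply: scale_cont.
by case: c.
Qed.

Lemma cintegralJ f : ccontinuous f -> cintegral (fun g => conjc (f g)) = conjc (cintegral f).
Proof.
move=> [f1 f2]; rewrite /cintegral.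
under eq_Rintegral do rewrite ReJ.
under [X in Complex _ X]eq_Rintegral do rewrite ImJ -mulN1r.
by rewrite RintegralZl ?mulN1r //; apply: continuous_integrable.
Qed.

Lemma cintegral_sum (I : eqType) (r : seq I) (P : pred I) (F : I -> G -> C) :
  (forall i, ccontinuous (F i)) ->
  cintegral (fun g => \sum_(i <- r | P i) F i g) = \sum_(i <- r | P i) cintegral (F i).
Proof.
move=> cF; elim: r => [|a r IHr].
  by under eq_cintegral do rewrite big_nil; rewrite big_nil cintegral_cst.
under eq_cintegral do rewrite big_cons; rewrite big_cons -IHr.
case: (P a) => //; apply: cintegralD => //; exact: ccontinuous_sum.
Qed.

Lemma cintegral_ge0 f : (forall g, 0 <= f g) -> 0 <= cintegral f.
Proof.
move=> f_ge0; rewrite /cintegral.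
under [X in Complex _ X]eq_Rintegral do rewrite (ger0_Im (f_ge0 _)).
rewrite Rintegral_cst // mul0r lecE /= eqxx /=.
by apply: Rintegral_ge0 => g _; have := f_ge0 g; rewrite lecE => /andP[].
Qed.

Definition mx_ccontinuous m n (F : G -> 'M[C]_(m, n)) :=
  forall i j, ccontinuous (fun g => F g i j).

Lemma mx_ccontinuous_cst m n (M : 'M[C]_(m, n)) : mx_ccontinuous (fun=> M).
Proof. by move=> i j; apply: ccontinuous_cst. Qed.

Lemma mx_ccontinuousM m n p (F : G -> 'M[C]_(m, n)) (H : G -> 'M[C]_(n, p)) :
  mx_ccontinuous F -> mx_ccontinuous H -> mx_ccontinuous (fun g => F g *m H g).
Proof.
move=> cF cH i j; under eq_fun do rewrite mxE.
by apply: ccontinuous_sum => k; apply: ccontinuousM.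
Qed.

Lemma mx_ccontinuous_adj m n (F : G -> 'M[C]_(m, n)) :
  mx_ccontinuous F -> mx_ccontinuous (fun g => adjmx (F g)).
Proof. by move=> cF i j; under eq_fun do rewrite adjmxE; apply: ccontinuousJ. Qed.

Lemma mx_ccontinuous_tens m n p q (F : G -> 'M[C]_(m, n)) (H : G -> 'M[C]_(p, q)) :
  mx_ccontinuous F -> mx_ccontinuous H -> mx_ccontinuous (fun g => F g *t H g).
Proof. by move=> cF cH i j; under eq_fun do rewrite mxE; apply: ccontinuousM. Qed.

Lemma mx_integralE m n (F : G -> 'M[C]_(m, n)) i j :
  mx_integral mu F i j = cintegral (fun g => F g i j).
Proof. by rewrite mxE. Qed.

Lemma mx_integralD m n (F H : G -> 'M[C]_(m, n)) :
  mx_ccontinuous F -> mx_ccontinuous H ->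
  mx_integral mu (fun g => F g + H g) = mx_integral mu F + mx_integral mu H.
Proof.
move=> cF cH; apply/matrixP => i j; rewrite [RHS]mxE !mx_integralE -cintegralD //.
by apply: eq_cintegral => g; rewrite mxE.
Qed.

Lemma mx_integralZ m n c (F : G -> 'M[C]_(m, n)) : mx_ccontinuous F ->
  mx_integral mu (fun g => c *: F g) = c *: mx_integral mu F.
Proof.
move=> cF; apply/matrixP => i j; rewrite [RHS]mxE !mx_integralE -cintegralZl //.
by apply: eq_cintegral => g; rewrite mxE.
Qed.

Lemma mx_integral_tensl m n p q (A : 'M[C]_(m, n)) (F : G -> 'M[C]_(p, q)) :
  mx_ccontinuous F -> mx_integral mu (fun g => A *t F g) = A *t mx_integral mu F.
Proof.
move=> cF; apply/matrixP => i j; rewrite [RHS]mxE !mx_integralE -cintegralZl //.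
by apply: eq_cintegral => g; rewrite mxE.
Qed.

Lemma mx_integral_adj m n (F : G -> 'M[C]_(m, n)) : mx_ccontinuous F ->
  mx_integral mu (fun g => adjmx (F g)) = adjmx (mx_integral mu F).
Proof.
move=> cF; apply/matrixP => i j; rewrite adjmxE !mx_integralE -cintegralJ //.
by apply: eq_cintegral => g; rewrite adjmxE.
Qed.

Lemma mx_integralMl m n p (A : 'M[C]_(m, n)) (F : G -> 'M[C]_(n, p)) :
  mx_ccontinuous F -> mx_integral mu (fun g => A *m F g) = A *m mx_integral mu F.
Proof.
move=> cF; apply/matrixP => i j; rewrite mx_integralE mxE.
under eq_cintegral do rewrite mxE.
rewrite cintegral_sum => [|k]; last exact/ccontinuousM/cF/ccontinuous_cst.
by apply: eq_bigr => k _; rewrite cintegralZl // mx_integralE.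
Qed.

Lemma mx_integralMr m n p (F : G -> 'M[C]_(m, n)) (B : 'M[C]_(n, p)) :
  mx_ccontinuous F -> mx_integral mu (fun g => F g *m B) = mx_integral mu F *m B.
Proof.
move=> cF; apply: (can_inj (@adjmxK _ _ _)).
have cFB : mx_ccontinuous (fun g => F g *m B).
  by apply: mx_ccontinuousM => //; apply: mx_ccontinuous_cst.
rewrite adjmxM -!mx_integral_adj // -mx_integralMl; last exact: mx_ccontinuous_adj.
by under eq_fun do rewrite adjmxM.
Qed.

Lemma mx_integral_tr n (F : G -> 'M[C]_n) : mx_ccontinuous F ->
  \tr (mx_integral mu F) = cintegral (fun g => \tr (F g)).
Proof.
move=> cF; rewrite cintegral_sum //.
by apply: eq_bigr => i _; apply: mx_integralE.
Qed.

Lemma mx_integral_psd n (F : G -> 'M[C]_n) : mx_ccontinuous F ->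
  (forall g, psdmx (F g)) -> psdmx (mx_integral mu F).
Proof.
move=> cF F_psd; split.
  by rewrite -mx_integral_adj //; congr mx_integral; apply/funext => g; case: (F_psd g).
move=> v; rewrite -mx_integralMl // -mx_integralMr; last first.
  by apply: mx_ccontinuousM => //; apply: mx_ccontinuous_cst.
by rewrite mx_integralE; apply: cintegral_ge0 => g; case: (F_psd g) => _.
Qed.

Section ConjugationAverage.

Variables (n : nat) (U : G -> 'M[C]_n).
Hypothesis U_cont : mx_ccontinuous U.

Definition conj_average (M : 'M[C]_n) : 'M[C]_n :=
  mx_integral mu (fun g => U g *m M *m adjmx (U g)).

Lemma mx_ccontinuous_conj M : mx_ccontinuous (fun g => U g *m M *m adjmx (U g)).
Proof.
apply: mx_ccontinuousM; last exact: mx_ccontinuous_adj.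
by apply: mx_ccontinuousM => //; apply: mx_ccontinuous_cst.
Qed.

Lemma conj_averageD M N : conj_average (M + N) = conj_average M + conj_average N.
Proof.
rewrite /conj_average -mx_integralD; try exact: mx_ccontinuous_conj.
by under eq_fun do rewrite mulmxDr mulmxDl.
Qed.

Lemma conj_averageZ c M : conj_average (c *: M) = c *: conj_average M.
Proof.
rewrite /conj_average -mx_integralZ; last exact: mx_ccontinuous_conj.
by under eq_fun do rewrite -scalemxAr -scalemxAl.
Qed.

Lemma conj_average_psd M : psdmx M -> psdmx (conj_average M).
Proof.
move=> M_psd; apply: mx_integral_psd; first exact: mx_ccontinuous_conj.
by move=> g; apply: psdmx_congruence.
Qed.

Lemma conj_average_tr M : (forall g, U g *m adjmx (U g) = 1%:M) ->
  \tr (conj_average M) = \tr M.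
Proof.
move=> U_unitary; rewrite /conj_average mx_integral_tr; last exact: mx_ccontinuous_conj.
under eq_cintegral do rewrite mxtrace_mulC mulmxA (mulmx1C (U_unitary _)) mul1mx.
exact: cintegral_cst.
Qed.

End ConjugationAverage.

Section Twirl.

Variables (dR dA : nat) (UR : G -> 'M[C]_dR) (UA : G -> 'M[C]_dA).
Hypotheses (UR_cont : mx_ccontinuous UR) (UA_cont : mx_ccontinuous UA).
Hypothesis UR_unitary : forall g, UR g *m adjmx (UR g) = 1%:M.
Hypothesis UA_unitary : forall g, UA g *m adjmx (UA g) = 1%:M.

Lemma twirlE M : twirl mu UR UA M = conj_average (fun g => UR g *t UA g) M.
Proof. by []. Qed.

Lemma twirl_tens1 tau : twirl mu UR UA (1%:M *t tau) = 1%:M *t conj_average UA tau.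
Proof.
rewrite twirlE /conj_average -mx_integral_tensl; last exact: mx_ccontinuous_conj.
by under eq_fun do rewrite adjmx_tens !tensmx_mul mulmx1 UR_unitary.
Qed.

Lemma twirl_mix a b eta tau :
  twirl mu UR UA ((a *: eta + b *: 1%:M) *t tau)
  = a *: twirl mu UR UA (eta *t tau) + b *: (1%:M *t conj_average UA tau).
Proof.
have V_cont := mx_ccontinuous_tens UR_cont UA_cont.
rewrite tensmxDl !tensmxZl twirlE (conj_averageD V_cont) !(conj_averageZ V_cont).
by rewrite -twirl_tens1.
Qed.

Lemma PhiE eta tau : Phi mu UR UA eta tau = Phi_rho (twirl mu UR UA (eta *t tau)).
Proof. by []. Qed.

Lemma Phi_mix (a b : R) eta tau : 0 <= a -> 0 <= b -> is_state eta -> is_state tau ->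
  Phi mu UR UA (a%:C *: eta + b%:C *: 1%:M) tau = a * Phi mu UR UA eta tau + b.
Proof.
move=> a_ge0 b_ge0 eta_state [tau_psd tau_tr].
have V_cont := mx_ccontinuous_tens UR_cont UA_cont.
have sigma_psd := conj_average_psd UA_cont tau_psd.
have sigma_tr : \tr (conj_average UA tau) = 1 by rewrite conj_average_tr.
have rho_psd : psdmx (twirl mu UR UA (eta *t tau)).
  by apply/conj_average_psd/psdmx_tens => //; case: eta_state.
(* 1 ⊗ σ - ρ is the twirl of (1 - η) ⊗ τ, which is ≥ 0 since η ≤ 1. *)
have sigma_feasible : feasible (twirl mu UR UA (eta *t tau)) (conj_average UA tau).
  split; first exact: sigma_psd.
  rewrite -twirl_tens1 -{1}(subrK eta 1%:M) tensmxDl twirlE (conj_averageD V_cont) addrK.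
  by apply/conj_average_psd/psdmx_tens => //; apply: psdmx_1B_state.
rewrite !PhiE twirl_mix Phi_rho_affine //; last by exists (conj_average UA tau).
exact: state_dim_gt0 eta_state.
Qed.

End Twirl.

End ComplexIntegral.

Theorem lemma10 (R : realType) (G : ptopologicalType)
  (mul : G -> G -> G) (inv : G -> G) (e : G)
  (mu : {measure set (borelG G) -> \bar R})
  (dR dA : nat) (UR : G -> 'M[R[i]]_dR) (UA : G -> 'M[R[i]]_dA)
  (eta : 'M[R[i]]_dR) (tau : 'M[R[i]]_dA) (p : R) :
  is_compact_group mul inv e ->
  is_normalized_haar mul mu ->
  is_unitary_rep mul e UR ->
  is_unitary_rep mul e UA ->
  is_state eta -> is_state tau ->
  0 <= p <= 1 ->
  let d : R := dR%:R in
  let maxmix : 'M[R[i]]_dR := (d^-1)%:C *: 1%:M in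
  let Lam : 'M[R[i]]_dR := p%:C *: eta + (1 - p)%:C *: maxmix in
  Phi mu UR UA Lam tau
    = p * Phi mu UR UA eta tau + (1 - p) * Phi mu UR UA maxmix tau
  /\ p * Phi mu UR UA eta tau + (1 - p) * Phi mu UR UA maxmix tau
    = p * Phi mu UR UA eta tau + (1 - p) / d.
Proof.
move=> [_ _ _ [_ _ _ compactG]] [mu_setT _ _ _] [_ _ UR_unitary UR_cont]
  [_ _ UA_unitary UA_cont] eta_state tau_state /andP[p_ge0 p_le1] d maxmix Lam.
have Phi_mixE a b : 0 <= a -> 0 <= b ->
    Phi mu UR UA (a%:C *: eta + b%:C *: 1%:M) tau = a * Phi mu UR UA eta tau + b.
  by move=> a_ge0 b_ge0; apply: Phi_mix.
have dV_ge0 : 0 <= d^-1 by rewrite invr_ge0 ler0n.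
have Phi_maxmix : Phi mu UR UA maxmix tau = d^-1.
  rewrite -[maxmix]add0r -(scale0r eta) -(rmorph0 (real_complex R)).
  by rewrite Phi_mixE // mul0r add0r.
have Phi_Lam : Phi mu UR UA Lam tau = p * Phi mu UR UA eta tau + (1 - p) / d.
  rewrite /Lam /maxmix scalerA -rmorphM Phi_mixE //.
  by rewrite mulr_ge0 // subr_ge0.
by rewrite Phi_Lam Phi_maxmix.
Qed.
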